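(* Let $\tau$ be a point of the upper half plane, and let $Q_1,Q_2\in M_2(\mathbb Z)$ be symmetric positive definite matrices of determinant $N$. Put $H_i=(\operatorname{Im}(Q_i\tau))^{-1}$ and $\mathscr R_i=\{M\in\operatorname{End}(X_{Q_i\tau}):{}^t\bar MH_i=H_iM^\iota\}$ for $i=1,2$. Let $S=\mathbb Z$ or $\mathbb Q$ and suppose there is $A\in GL_2(S)$ with $Q_2=(\det A)^{-1}AQ_1\,{}^tA$. Then $M\mapsto AMA^{-1}$ is an $S$-algebra isomorphism $\operatorname{End}_S(X_{Q_1\tau})\to\operatorname{End}_S(X_{Q_2\tau})$, and it induces an $S$-algebra isomorphism $\mathscr R_1\otimes_{\mathbb Z}S\to\mathscr R_2\otimes_{\mathbb Z}S$.
   Context: For $z$ in the Siegel upper half space $\mathfrak h_2=\{z\in M_2(\mathbb C):{}^tz=z,\operatorname{Im}z>0\}$: $L_z=[z,\mathbf 1_2]\mathbb Z^4\subset\mathbb C^2$, $X_z=\mathbb C^2/L_z$; $\operatorname{End}(X_z)=\operatorname{End}_{\mathbb Z}(X_z)$ is identified with the ring of $M\in M_2(\mathbb C)$ with $ML_z\subseteq L_z$, and $\operatorname{End}_{\mathbb Q}(X_z)=\operatorname{End}(X_z)\otimes\mathbb Q$. For a $2\times2$ matrix $M$, $M^\iota=\operatorname{tr}(M)\mathbf 1_2-M$ and $\bar M$ is entrywise complex conjugation. $N$ is a prime. *)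

From HB Require Import structures.
From mathcomp Require Import all_boot all_order all_algebra.
Set Implicit Arguments. Unset Strict Implicit. Unset Printing Implicit Defensive.
Import Order.TTheory GRing.Theory Num.Theory.
Local Open Scope ring_scope.

Inductive scal := SZ | SQ.

Definition intmx (R : nzRingType) m n (A : 'M[int]_(m, n)) : 'M[R]_(m, n) :=
  map_mx (fun x : int => x%:~R) A.

Definition ratmx (C : numClosedFieldType) m n (A : 'M[rat]_(m, n)) : 'M[C]_(m, n) :=
  map_mx (fun x : rat => ratr x) A.

(* v lies in the lattice L_z = [z, 1_2] Z^4. *)
Definition in_lattice (C : numClosedFieldType) (z : 'M[C]_2) (v : 'cV[C]_2) : Prop :=
  exists a b : 'cV[int]_2, v = z *m intmx C a + intmx C b.

(* End(X_z) = End_Z(X_z): complex matrices M with M L_z ⊆ L_z. *)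
Definition EndX (C : numClosedFieldType) (z : 'M[C]_2) (M : 'M[C]_2) : Prop :=
  forall v, in_lattice z v -> in_lattice z (M *m v).

(* End_S(X_z); for S = Q, End(X_z) ⊗ Q realised inside M_2(C). *)
Definition EndS (C : numClosedFieldType) (S : scal) (z M : 'M[C]_2) : Prop :=
  match S with
  | SZ => EndX z M
  | SQ => exists n : nat, (0 < n)%N /\ EndX z (n%:R *: M)
  end.

Definition Hmat (C : numClosedFieldType) (z : 'M[C]_2) : 'M[C]_2 :=
  invmx (map_mx (fun x : C => 'Im x) z).

Definition iota_mx (C : numClosedFieldType) (M : 'M[C]_2) : 'M[C]_2 :=
  (\tr M)%:M - M.

Definition Rring (C : numClosedFieldType) (z M : 'M[C]_2) : Prop :=
  EndX z M /\ (map_mx (fun x : C => x^*) M)^T *m Hmat z = Hmat z *m iota_mx M.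

(* R_z ⊗_Z S realised inside M_2(C). *)
Definition RS (C : numClosedFieldType) (S : scal) (z M : 'M[C]_2) : Prop :=
  match S with
  | SZ => Rring z M
  | SQ => exists n : nat, (0 < n)%N /\ Rring z (n%:R *: M)
  end.

Definition GL2 (S : scal) (A : 'M[rat]_2) : Prop :=
  A \in unitmx /\
  (S = SZ -> exists Ai Bi : 'M[int]_2, A = intmx rat Ai /\ invmx A = intmx rat Bi).

Definition posdef (C : numClosedFieldType) (Q : 'M[int]_2) : Prop :=
  Q^T = Q /\
  forall v : 'cV[C]_2, (forall i, v i 0 \is Num.real) -> v != 0 ->
    0 < (v^T *m intmx C Q *m v) 0 0.

Definition is_scalar (S : scal) (c : rat) : Prop :=
  match S with SZ => exists k : int, c = k%:~R | SQ => True end.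

From HB Require Import structures.
From mathcomp Require Import all_boot all_order all_algebra.
Import Order.TTheory GRing.Theory Num.Theory.
Set Implicit Arguments. Unset Strict Implicit. Unset Printing Implicit Defensive.
Local Open Scope ring_scope.

(** For [z_i = tau Q_i] the hypothesis says [z_2 = (det A)^-1 A z_1 A^T], so
    [A z_1 = z_2 (adj A)^T]: an integral matrix [P] proportional to [A] maps the
    lattice [L_{z_1}] into [L_{z_2}] (in dimension 2 the twist only sees [A] up to
    scalars), and similarly for [A^-1].  Choosing [d] with [d A] and [d A^-1]
    integral ([d = 1] over [Z]), [d^2 A M A^-1] stabilises [L_{z_2}] whenever [M]
    stabilises [L_{z_1}].  As [A] is real, [Im z_2] is the same twist of [Im z_1],
    and conjugation by [A] carries the condition [t(conj M) H_1 = H_1 M^iota] to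
    the one for [H_2].  The inverse map is conjugation by [A^-1], which satisfies
    the hypotheses with [Q_1] and [Q_2] exchanged.  Primality of [N] and positive
    definiteness are only used through [det Q_i <> 0]. *)

Definition twist (R : comUnitRingType) n (A X : 'M[R]_n) : 'M[R]_n :=
  (\det A)^-1 *: (A *m X *m A^T).

Lemma twistZl (F : fieldType) (c : F) (A X : 'M[F]_2) :
  c != 0 -> twist (c *: A) X = twist A X.
Proof.
move=> c0; rewrite /twist detZ linearZ /= -!scalemxAl -scalemxAr !scalerA.
by rewrite invfM -mulrA -expr2 mulrAC mulVf ?expf_neq0 ?mul1r.
Qed.

Lemma twistZr (R : comUnitRingType) n (c : R) (A X : 'M[R]_n) :
  twist A (c *: X) = c *: twist A X.
Proof. by rewrite /twist -scalemxAr -scalemxAl !scalerA mulrC. Qed.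

Lemma twistK (R : comUnitRingType) n (A : 'M[R]_n) :
  A \in unitmx -> cancel (twist A) (twist (invmx A)).
Proof.
move=> Au X; rewrite /twist det_inv invrK -scalemxAr -scalemxAl scalerA.
rewrite mulrC mulVr -?unitmxE // scale1r !mulmxA mulVmx // mul1mx.
by rewrite -mulmxA -trmx_mul mulVmx // trmx1 mulmx1.
Qed.

Lemma twist_mul_adj (R : comUnitRingType) n (A X : 'M[R]_n) :
  A \in unitmx -> twist A X *m (\adj A)^T = A *m X.
Proof.
move=> Au; rewrite /twist -scalemxAl -!mulmxA -trmx_mul mul_adj_mx tr_scalar_mx.
by rewrite mul_mx_scalar -scalemxAr scalerA mulVr -?unitmxE // scale1r.
Qed.

Lemma unitmx_twist (R : comUnitRingType) n (A X : 'M[R]_n) :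
  A \in unitmx -> X \in unitmx -> twist A X \in unitmx.
Proof.
move=> Au Xu; rewrite unitmxZ ?unitrV -?unitmxE //.
by rewrite !unitmx_mul unitmx_tr Au Xu.
Qed.

Lemma map_twist (F R : fieldType) (f : {rmorphism F -> R}) n (A X : 'M[F]_n) :
  map_mx f (twist A X) = twist (map_mx f A) (map_mx f X).
Proof. by rewrite /twist map_mxZ !map_mxM map_trmx det_map_mx fmorphV. Qed.

Lemma ratmx_twist (C : numClosedFieldType) (A X : 'M[rat]_2) :
  ratmx C (twist A X) = twist (ratmx C A) (ratmx C X).
Proof. exact: map_twist. Qed.

Lemma ratmx_intmx (C : numClosedFieldType) m n (X : 'M[int]_(m, n)) :
  ratmx C (intmx rat X) = intmx C X.
Proof. by apply/matrixP => i j; rewrite !mxE ratr_int. Qed.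

Lemma intmxZ (R : nzRingType) m n (k : int) (X : 'M[int]_(m, n)) :
  intmx R (k *: X) = k%:~R *: intmx R X.
Proof. by apply/matrixP => i j; rewrite !mxE intrM. Qed.

Lemma ratmx_unitmx (C : numClosedFieldType) (A : 'M[rat]_2) :
  (ratmx C A \in unitmx) = (A \in unitmx).
Proof. by rewrite !unitmxE !unitfE det_map_mx fmorph_eq0. Qed.

Lemma conjmxZ (F : fieldType) m n (V : 'M[F]_(m, n)) a f :
  conjmx V (a *: f) = a *: conjmx V f.
Proof. by rewrite /conjmx -scalemxAr -scalemxAl. Qed.

Section Lattice.
Variable C : numClosedFieldType.

(* [P z = (twist P z) (adj P)^T], and the adjugate of an integral matrix is integral. *)
Lemma in_lattice_mul (z : 'M[C]_2) (P : 'M[int]_2) v :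
  intmx C P \in unitmx -> in_lattice z v ->
  in_lattice (twist (intmx C P) z) (intmx C P *m v).
Proof.
move=> Pu [a [b ->]]; exists ((\adj P)^T *m a), (P *m b).
by rewrite /intmx mulmxDr mulmxA -twist_mul_adj // !map_mxM -map_trmx -map_mx_adj mulmxA.
Qed.

Lemma EndX_mul_intmx (z : 'M[C]_2) (P P' : 'M[int]_2) M :
  intmx C P \in unitmx -> intmx C P' \in unitmx ->
  twist (intmx C P') (twist (intmx C P) z) = z ->
  EndX z M -> EndX (twist (intmx C P) z) (intmx C P *m M *m intmx C P').
Proof.
move=> Pu P'u zK HM v Hv; rewrite -!mulmxA; apply: in_lattice_mul => //.
by apply: HM; rewrite -zK; apply: in_lattice_mul.
Qed.

Lemma EndX_conjmx (z A : 'M[C]_2) (d : nat) (P P' : 'M[int]_2) M :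
  A \in unitmx -> (0 < d)%N ->
  d%:R *: A = intmx C P -> d%:R *: invmx A = intmx C P' ->
  EndX z M -> EndX (twist A z) (d%:R ^+ 2 *: conjmx A M).
Proof.
move=> Au d_gt0 dA dA' HM.
have d0 : d%:R != 0 :> C by rewrite pnatr_eq0 -lt0n.
have dAu (B : 'M[C]_2) : B \in unitmx -> d%:R *: B \in unitmx.
  by rewrite unitmxZ ?unitfE.
have := @EndX_mul_intmx z P P' M; rewrite -dA -dA' !twistZl // twistK //.
rewrite -scalemxAr -!scalemxAl scalerA -expr2 -conjumx //.
by apply; rewrite ?dAu ?unitmx_inv.
Qed.
End Lattice.

Lemma denom_mx_rat m n (X : 'M[rat]_(m, n)) :
  exists2 d : nat, (0 < d)%N & exists P, d%:R *: X = intmx rat P.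
Proof.
pose d := (\prod_(ij : 'I_m * 'I_n) `|denq (X ij.1 ij.2)|)%N.
exists d; first by rewrite prodn_gt0 // => ij; rewrite absz_gt0 denq_neq0.
exists (\matrix_(i, j) Num.floor (d%:R * X i j)); apply/matrixP => i j.
rewrite !mxE; apply/esym/eqP; rewrite -intrEfloor.
rewrite /d (bigD1 (i, j)) //= natrM mulrAC natr_absz gtr0_norm ?denq_gt0 //.
by rewrite [_ * X i j]mulrC -numqE rpredM ?intr_int ?natr_int.
Qed.

Section Rosati.
Variable C : numClosedFieldType.
Implicit Types A G H M : 'M[C]_2.

(* The Rosati involution of [M] with respect to [H] is [M^iota]. *)
Definition rosati_iota H M :=
  (map_mx (fun x : C => x^*) M)^T *m H = H *m iota_mx M.

Lemma rosati_iota_invmx G M : G \in unitmx ->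
  rosati_iota (invmx G) M <-> G *m (map_mx (fun x : C => x^*) M)^T = iota_mx M *m G.
Proof.
move=> Gu; rewrite /rosati_iota; split=> E.
  by rewrite -[LHS]mulmx1 -(mulVmx Gu) mulmxA -(mulmxA G) E mulmxA mulmxV ?mul1mx.
by rewrite -[LHS]mul1mx -(mulVmx Gu) -mulmxA (mulmxA G) E mulmxK.
Qed.

Lemma iota_conjmx A M : A \in unitmx -> iota_mx (conjmx A M) = conjmx A (iota_mx M).
Proof.
move=> Au; rewrite !conjumx // /iota_mx mxtrace_mulC mulmxA mulVmx // mul1mx.
by rewrite mulmxBr mulmxBl scalar_mxC mulmxK.
Qed.

Lemma rosati_iotaZ H M (k : nat) :
  rosati_iota H M -> rosati_iota H (k%:R *: M).
Proof.
rewrite /rosati_iota /iota_mx map_mxZ /= conjC_nat linearZ /= mxtraceZ.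
by rewrite -scale_scalar_mx -scalerBr -scalemxAl -scalemxAr => ->.
Qed.

Lemma rosati_iota_twist G A M :
  G \in unitmx -> A \in unitmx -> map_mx (fun x : C => x^*) A = A ->
  rosati_iota (invmx G) M -> rosati_iota (invmx (twist A G)) (conjmx A M).
Proof.
move=> Gu Au Areal /(rosati_iota_invmx _ Gu) E.
apply/rosati_iota_invmx; first exact: unitmx_twist.
rewrite iota_conjmx // !conjumx // /twist -scalemxAl -scalemxAr; congr (_ *: _).
rewrite !map_mxM map_invmx Areal !trmx_mul trmx_inv !mulmxA.
rewrite -(mulmxA _ A^T) mulmxV ?unitmx_tr // mulmx1 -(mulmxA A G) E.
by rewrite !mulmxA mulmxKV.
Qed.

Lemma Hmat_scale_ratmx (tau : C) (X : 'M[rat]_2) :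
  Hmat (tau *: ratmx C X) = invmx ('Im tau *: ratmx C X).
Proof. by congr invmx; apply/matrixP => i j; rewrite !mxE ImMr ?rpred_rat. Qed.
End Rosati.

Lemma GL2_inv S A : GL2 S A -> GL2 S (invmx A).
Proof.
case=> Au AZ; split=> [|/AZ [P [P' [AP A'P]]]]; first by rewrite unitmx_inv.
by exists P', P; rewrite invmxK.
Qed.

Lemma GL2_integral_multiple S A : GL2 S A ->
  exists d : nat, [/\ (0 < d)%N, S = SZ -> d = 1%N,
    exists P, d%:R *: A = intmx rat P & exists P', d%:R *: invmx A = intmx rat P'].
Proof.
case: S => -[_ AZ].
  have [P [P' [AP A'P]]] := AZ erefl.
  by exists 1%N; split=> //; [exists P | exists P']; rewrite scale1r.
have [d1 d1_gt0 [P1 dA]] := denom_mx_rat A.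
have [d2 d2_gt0 [P2 dA']] := denom_mx_rat (invmx A).
exists (d1 * d2)%N; split => //; first by rewrite muln_gt0 d1_gt0.
- by exists (d2%:Z *: P1); rewrite intmxZ -dA scalerA -natrM mulnC.
- by exists (d1%:Z *: P2); rewrite intmxZ -dA' scalerA -natrM.
Qed.

Lemma GL2_EndX_conjmx (C : numClosedFieldType) S (A : 'M[rat]_2) : GL2 S A ->
  exists2 d : nat, (0 < d)%N /\ (S = SZ -> d = 1%N) &
    forall z M, EndX z M ->
      EndX (twist (ratmx C A) z) (d%:R ^+ 2 *: conjmx (ratmx C A) M).
Proof.
move=> GL2A; have [Au _] := GL2A.
have [d [d_gt0 dZ [P dA] [P' dA']]] := GL2_integral_multiple GL2A.
exists d => // z M; apply: (EndX_conjmx (P := P) (P' := P')); rewrite ?ratmx_unitmx //.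
- by rewrite -ratmx_intmx -dA /ratmx map_mxZ rmorph_nat.
- by rewrite -ratmx_intmx -dA' /ratmx map_mxZ map_invmx rmorph_nat.
Qed.

Section Transport.
Variables (C : numClosedFieldType) (S : scal) (A : 'M[rat]_2).
Hypothesis GL2A : GL2 S A.

Lemma EndS_conjmx (z M : 'M[C]_2) :
  EndS S z M -> EndS S (twist (ratmx C A) z) (conjmx (ratmx C A) M).
Proof.
have [d [d_gt0 dZ] EndXd] := GL2_EndX_conjmx C GL2A.
case: S dZ => [/(_ erefl) d1 /EndXd | _ [n [n_gt0 /EndXd HM]]].
  by rewrite d1 expr1n scale1r.
exists (d ^ 2 * n)%N; split; first by rewrite muln_gt0 expn_gt0 d_gt0.
by rewrite natrM natrX -scalerA -conjmxZ.
Qed.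

Lemma RS_conjmx (tau : C) (X : 'M[rat]_2) M :
  'Im tau != 0 -> X \in unitmx ->
  RS S (tau *: ratmx C X) M ->
  RS S (tau *: ratmx C (twist A X)) (conjmx (ratmx C A) M).
Proof.
move=> tau0 Xu; have [Au _] := GL2A.
have A'u : ratmx C A \in unitmx by rewrite ratmx_unitmx.
have zE : tau *: ratmx C (twist A X) = twist (ratmx C A) (tau *: ratmx C X).
  by rewrite ratmx_twist twistZr.
have rosati N : rosati_iota (Hmat (tau *: ratmx C X)) N ->
    rosati_iota (Hmat (tau *: ratmx C (twist A X))) (conjmx (ratmx C A) N).
  rewrite !Hmat_scale_ratmx ratmx_twist -twistZr; apply: rosati_iota_twist => //.
  - by rewrite unitmxZ ?unitfE ?ratmx_unitmx.
  - by apply/matrixP => i j; rewrite !mxE conj_Creal ?rpred_rat.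
have [d [d_gt0 dZ] EndXd] := GL2_EndX_conjmx C GL2A.
rewrite zE; case: S dZ => [/(_ erefl) d1 [/EndXd HM /rosati HH]
                         | _ [n [n_gt0 [/EndXd HM /rosati HH]]]].
  by rewrite d1 expr1n scale1r -zE in HM *.
exists (d ^ 2 * n)%N; split; first by rewrite muln_gt0 expn_gt0 d_gt0.
rewrite natrM natrX -scalerA -conjmxZ; split=> //.
by rewrite -zE -natrX; apply: rosati_iotaZ.
Qed.
End Transport.

Theorem mainTheorem9 (C : numClosedFieldType) (N : nat) (tau : C)
  (Q1 Q2 : 'M[int]_2) (S : scal) (A : 'M[rat]_2) :
  prime N -> 0 < 'Im tau ->
  posdef C Q1 -> posdef C Q2 ->
  \det Q1 = N%:Z -> \det Q2 = N%:Z ->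
  GL2 S A ->
  intmx rat Q2 = (\det A)^-1 *: (A *m intmx rat Q1 *m A^T) ->
  let z1 := tau *: intmx C Q1 in
  let z2 := tau *: intmx C Q2 in
  let phi := fun M : 'M[C]_2 => ratmx C A *m M *m invmx (ratmx C A) in
  [/\ phi 1%:M = 1%:M,
      (forall M M', phi (M + M') = phi M + phi M'),
      (forall M M', phi (M *m M') = phi M *m phi M'),
      (forall (c : rat) M, is_scalar S c -> phi (ratr c *: M) = ratr c *: phi M) &
      (forall M M', phi M = phi M' -> M = M')] /\
  ((forall M, EndS S z1 M -> EndS S z2 (phi M)) /\
   (forall M', EndS S z2 M' -> exists M, EndS S z1 M /\ phi M = M')) /\
  ((forall M, RS S z1 M -> RS S z2 (phi M)) /\
   (forall M', RS S z2 M' -> exists M, RS S z1 M /\ phi M = M')).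
Proof.
move=> N_prime Im_gt0 _ _ detQ1 detQ2 GL2A Q2E z1 z2 phi.
have [Au _] := GL2A; have GL2A' := GL2_inv GL2A.
have A'u : ratmx C A \in unitmx by rewrite ratmx_unitmx.
have ratmxV : ratmx C (invmx A) = invmx (ratmx C A) by apply: map_invmx.
have phiE M : phi M = conjmx (ratmx C A) M by rewrite conjumx.
have tau0 : 'Im tau != 0 by rewrite gt_eqF.
have Qu Q : \det Q = N%:Z -> intmx rat Q \in unitmx.
  by move=> detQ; rewrite unitmxE det_map_mx detQ unitfE intr_eq0 eqz_nat -lt0n prime_gt0.
have z1E : z1 = tau *: ratmx C (intmx rat Q1) by rewrite ratmx_intmx.
have z2E : z2 = tau *: ratmx C (intmx rat Q2) by rewrite ratmx_intmx.
have Q1E : intmx rat Q1 = twist (invmx A) (intmx rat Q2) by rewrite Q2E twistK.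
have z2_twist : z2 = twist (ratmx C A) z1 by rewrite z2E z1E Q2E ratmx_twist twistZr.
have z1_twist : z1 = twist (ratmx C (invmx A)) z2 by rewrite z2_twist ratmxV twistK.
split; [split | split; split].
- by rewrite phiE conjmx_scalar ?row_free_unit.
- by move=> M M'; rewrite /phi mulmxDr mulmxDl.
- by move=> M M'; rewrite !phiE conjmxM // inE stablemx_unit.
- by move=> c M _; rewrite !phiE conjmxZ.
- by move=> M M'; rewrite !phiE => E; rewrite -(conjmxK M A'u) E conjmxK.
- by move=> M; rewrite phiE z2_twist; apply: EndS_conjmx.
- move=> M' HM'; exists (conjmx (ratmx C (invmx A)) M').
  by split; [rewrite z1_twist; apply: EndS_conjmx | rewrite phiE ratmxV conjmxVK].
- by move=> M; rewrite phiE z1E z2E Q2E; apply: RS_conjmx; rewrite ?Qu.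
- move=> M' HM'; exists (conjmx (ratmx C (invmx A)) M').
  split; last by rewrite phiE ratmxV conjmxVK.
  by rewrite z1E Q1E; apply: RS_conjmx; rewrite -?z2E ?Qu.
Qed.
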